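(* Let $G$ be a connected graph on $n$ vertices with maximum degree $\Delta\ge1$. Then $G$ contains a forest $F$ and disjoint vertex sets $A_0,A_1\subseteq V(G)$ such that (i) $A_0\cup A_1$ is an independent set in $G$; (ii) $d_F(v)=d_G(v)$ for all $v\in A_0$; (iii) $d_F(v)\ge d_G(v)-1$ for all $v\in A_1$; (iv) $|A_0|+\frac12|A_1|\ge \gamma_\Delta n$, where \[\gamma_\Delta=\frac{1}{\Delta^2+\Delta+2}+\frac{3}{2(\Delta^2+2\Delta+3)}.\]
   Context: $d_F(v)$ and $d_G(v)$ denote the degree of $v$ in $F$ and in $G$ respectively. *)

From mathcomp Require Import all_boot all_order all_algebra.
Set Implicit Arguments. Unset Strict Implicit. Unset Printing Implicit Defensive.
Import GRing.Theory Num.Theory.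

Definition simple_graph (T : finType) (e : rel T) : Prop :=
  symmetric e /\ irreflexive e.

Definition deg (T : finType) (e : rel T) (v : T) : nat := #|[set y | e v y]|.

Definition maxdeg (T : finType) (e : rel T) : nat := \max_(v : T) deg e v.

Definition connected_graph (T : finType) (e : rel T) : Prop :=
  forall x y : T, connect e x y.

Definition subgraph (T : finType) (f g : rel T) : Prop :=
  forall x y, f x y -> g x y.

Definition remove_edge (T : finType) (f : rel T) (u v : T) : rel T :=
  fun x y => f x y && ~~ (((x == u) && (y == v)) || ((x == v) && (y == u))).

(* a forest: a simple graph in which no edge lies on a cycle, i.e. removing
   any edge uv disconnects u from v *)
Definition forest (T : finType) (f : rel T) : Prop :=
  simple_graph f /\
  forall u v, f u v -> ~~ connect (remove_edge f u v) u v.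

Definition independent (T : finType) (e : rel T) (A : {set T}) : Prop :=
  forall x y, x \in A -> y \in A -> ~~ e x y.

Definition gamma (D : nat) : rat :=
  (1 / (D ^ 2 + D + 2)%N%:R + 3 / (2 * (D ^ 2 + 2 * D + 3))%N%:R)%R.

From mathcomp Require Import all_boot all_order all_algebra.
From mathcomp Require Import zify ring lra.
Import GRing.Theory Num.Theory.

Set Implicit Arguments.
Unset Strict Implicit.
Unset Printing Implicit Defensive.

(* Vertices are chosen greedily among the undominated ones (neither chosen nor
   adjacent to a chosen vertex), so the chosen set stays independent.  First a
   vertex goes into A0, with all its edges added to F, whenever at most one of
   its neighbours is already dominated; then a vertex goes into A1, with all
   edges but one, whenever at most two are (the missing edge going to one of
   them).  Every edge of F meets a chosen vertex, so the undominated neighbours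
   of the new vertex are isolated in F; as it is joined to at most one other
   vertex, F stays a forest.  When a phase stops, every undominated vertex has
   at least k = 2 (resp. 3) dominated neighbours, while, D being the maximum
   degree, a dominated vertex has at most D - 1 undominated neighbours and at
   most D |A| vertices are dominated by the chosen set A.  Double counting gives
   2n <= |A0| (D^2 + D + 2) and 3n <= |A0 :|: A1| (D^2 + 2D + 3), whose
   combination is the bound. *)

Definition ranked (T : finType) (f : rel T) (r : T -> nat) : Prop :=
  (forall x y, f x y -> r x != r y) /\
  (forall x y z, f x y -> f x z -> r y < r x -> r z < r x -> y = z).

Lemma connect_last_step (T : finType) (c : rel T) u x :
  connect c u x -> x != u -> exists2 z, connect c u z & c z x.
Proof.
move=> /connectP [p pth ->]; elim/last_ind: p pth => [|p z _] /=; first by rewrite eqxx.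
rewrite rcons_path last_rcons => /andP [pth cz] _; exists (last u p) => //.
by apply/connectP; exists p.
Qed.

Lemma leq_connect (T : finType) (c : rel T) (r : T -> nat) u x :
  (forall a b, c a b -> r a < r b) -> connect c u x -> r u <= r x.
Proof.
move=> cr /connectP [p pth ->]; elim: p u pth => [|y p IH] u //= /andP [cuy pth].
exact: leq_trans (ltnW (cr _ _ cuy)) (IH _ pth).
Qed.

Section RemoveEdge.
Variables (T : finType) (f : rel T).

Lemma remove_edgeC u v : remove_edge f u v =2 remove_edge f v u.
Proof. by move=> x y; rewrite /remove_edge orbC. Qed.

Lemma remove_edge_sym u v : symmetric f -> symmetric (remove_edge f u v).
Proof.
move=> fsym x y; rewrite /remove_edge fsym; congr (_ && ~~ _).
by rewrite orbC [(x == v) && _]andbC [(x == u) && _]andbC.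
Qed.

End RemoveEdge.

Lemma ranked_forest (T : finType) (f : rel T) (r : T -> nat) :
  symmetric f -> ranked f r -> forest f.
Proof.
move=> fsym [rne rdown].
have cut u v : f u v -> r v < r u -> ~~ connect (remove_edge f u v) u v.
  move=> fuv ltvu; pose up := [rel a b | f a b && (r a < r b)].
  pose S := [pred x | connect up u x].
  (* Leaving [S] along an edge would need a second lower neighbour of some vertex of [S]. *)
  have stay x y : remove_edge f u v x y -> x \in S -> y \in S.
    move=> /andP [fxy not_uv] Sx; have := rne _ _ fxy; rewrite neq_ltn => /orP [lt|lt].
      by apply: connect_trans Sx (connect1 _); rewrite /= fxy lt.
    have [exu|nxu] := eqVneq x u.
      by subst x; move: not_uv; rewrite (rdown _ _ _ fxy fuv lt ltvu) !eqxx.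
    have [z Sz /andP [fzx ltzx]] := connect_last_step Sx nxu.
    by rewrite (rdown _ _ _ fxy (_ : f x z) lt ltzx) // fsym.
  have closedS : closed (remove_edge f u v) S.
    by move=> x y e; apply/idP/idP; apply: stay; rewrite // remove_edge_sym.
  apply/negP => /(closed_connect closedS); rewrite !inE connect0 => /esym.
  have up_lt a b : up a b -> r a < r b by case/andP.
  by move/(leq_connect up_lt); lia.
have firr : irreflexive f by move=> x; apply/negP => /rne; rewrite eqxx.
split=> // u v fuv; case: (ltngtP (r u) (r v)) => [lt|lt|eq].
- rewrite (eq_connect (remove_edgeC f u v)) (sym_connect_sym (remove_edge_sym v u fsym)).
  by apply: cut; rewrite // fsym.
- exact: cut.
- by have := rne _ _ fuv; rewrite eq eqxx.
Qed.

Definition add_star (T : finType) (f : rel T) (w : T) (S : pred T) : rel T :=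
  fun x y => [|| f x y, (x == w) && S y | (y == w) && S x].

Section AddStar.
Variables (T : finType) (f : rel T) (w : T) (S : pred T).

Lemma add_star_sym : symmetric f -> symmetric (add_star f w S).
Proof. by move=> fsym x y; rewrite /add_star fsym; congr (_ || _); rewrite orbC. Qed.

Lemma subgraph_add_star : subgraph f (add_star f w S).
Proof. by move=> x y fxy; rewrite /add_star fxy. Qed.

Lemma add_star_center y : S y -> add_star f w S w y.
Proof. by move=> Sy; rewrite /add_star eqxx Sy orbT. Qed.

(* [w] becomes a new rank above all others, and the leaves of the star (the
   vertices of [S] without [f]-edges) an even higher one; only the at most one
   vertex of [S] with [f]-edges stays below [w]. *)
Lemma ranked_add_star (r : T -> nat) :
  symmetric f -> ranked f r -> (forall y, ~~ f w y) -> ~~ S w ->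
  #|[set y | S y && [exists z, f y z]]| <= 1 ->
  exists r', ranked (add_star f w S) r'.
Proof.
move=> fsym [rne rdown] w_iso Sw /card_le1_eqP one_inner.
pose M := (\max_x r x).+1.
have rM x : r x < M by rewrite ltnS leq_bigmax.
pose leaf x := S x && [forall z, ~~ f x z].
pose r' x := if x == w then M else if leaf x then M.+1 else r x.
exists r'.
have r'_old x y : f x y -> r' x = r x.
  move=> fxy; have xw : x != w by apply: contraTneq fxy => ->; exact: w_iso.
  have inner : leaf x = false by apply/nandP; right; apply/forallPn; exists y; rewrite fxy.
  by rewrite /r' (negbTE xw) inner.
have r'_w : r' w = M by rewrite /r' eqxx.
have r'_star y : S y -> r' y != r' w.
  move=> Sy; have yw : y != w by apply: contraNneq Sw => <-.
  rewrite r'_w /r' (negbTE yw); case: (leaf y); first by rewrite gtn_eqF.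
  by rewrite ltn_eqF.
split.
  move=> x y /or3P [fxy | /andP [/eqP -> Sy] | /andP [/eqP -> Sx]].
  - by rewrite (r'_old _ _ fxy) (r'_old y x) ?rne // fsym.
  - by rewrite eq_sym r'_star.
  - exact: r'_star.
move=> x y z fxy fxz ltyx ltzx.
have [exw|xw] := eqVneq x w.
  have low u :
      add_star f w S x u -> r' u < r' x -> u \in [set u | S u && [exists z, f u z]].
    rewrite exw r'_w => /or3P [fwu | /andP [_ Su] | /andP [_ Sw']].
    - by have := w_iso u; rewrite fwu.
    - have uw : u != w by apply: contraNneq Sw => <-.
      rewrite /r' (negbTE uw) inE Su /=; case: ifP => [_|]; first by rewrite ltnNge leqnSn.
      rewrite /leaf Su /= => /negbT /forallPn [v]; rewrite negbK => fuv _.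
      by apply/existsP; exists v.
    - by rewrite Sw' in Sw.
  exact/esym/(one_inner _ _ (low _ fxy ltyx) (low _ fxz ltzx)).
have [lx|inx] := boolP (leaf x).
  have only_w u : add_star f w S x u -> u = w.
    case/or3P => [fxu | /andP [/eqP exw _] | /andP [/eqP -> _]] //.
    - by case/andP: lx => _ /forallP/(_ u); rewrite fxu.
    - by rewrite exw eqxx in xw.
  by rewrite (only_w _ fxy) (only_w _ fxz).
have r'x : r' x = r x by rewrite /r' (negbTE xw) (negbTE inx).
have down u : add_star f w S x u -> r' u < r' x -> f x u /\ r' u = r u.
  case/or3P => [fxu | /andP [/eqP exw _] | /andP [/eqP -> _]] ltux.
  - by split=> //; apply: (r'_old u x); rewrite fsym.
  - by rewrite exw eqxx in xw.
  - by move: ltux; rewrite r'x r'_w ltnNge ltnW.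
have [fxy' ry] := down _ fxy ltyx; have [fxz' rz] := down _ fxz ltzx.
by apply: rdown fxy' fxz' _ _; rewrite -?ry -?rz -r'x.
Qed.

End AddStar.

Definition nbhd (T : finType) (g : rel T) (A : {set T}) : {set T} :=
  [set y | [exists a in A, g y a]].

Definition undominated (T : finType) (g : rel T) (A : {set T}) : {set T} :=
  ~: (A :|: nbhd g A).

Definition touches (T : finType) (f : rel T) (A : {set T}) : Prop :=
  forall x y, f x y -> (x \in A) || (y \in A).

Record admissible (T : finType) (g : rel T) (A0 A1 : {set T}) (f : rel T) : Prop :=
  Admissible {
    admissible_sym : symmetric f;
    admissible_ranked : exists r, ranked f r;
    admissible_sub : subgraph f g;
    admissible_touches : touches f (A0 :|: A1);
    admissible_disjoint : [disjoint A0 & A1];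
    admissible_indep : independent g (A0 :|: A1);
    admissible_full : forall v y, v \in A0 -> g v y -> f v y;
    admissible_almost_full : forall v, v \in A1 -> exists d, forall y, g v y -> y != d -> f v y }.

Section Admissible.
Variables (T : finType) (g : rel T).
Hypotheses (gsym : symmetric g) (girr : irreflexive g).

Lemma admissible0 : admissible g set0 set0 (fun _ _ => false).
Proof.
split=> //; first by exists (fun _ => 0).
- by rewrite -setI_eq0 set0I.
- by move=> x y; rewrite setU0 inE.
- by move=> v y; rewrite inE.
- by move=> v; rewrite inE.
Qed.

Lemma undominatedP A w :
  w \in undominated g A -> w \notin A /\ forall a, a \in A -> ~~ g w a.
Proof.
rewrite !inE negb_or => /andP [-> wN]; split=> // a aA; apply: contra wN => gwa.
by apply/existsP; exists a; rewrite aA.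
Qed.

Lemma independent_setU1 A w :
  independent g A -> w \in undominated g A -> independent g (w |: A).
Proof.
move=> indA /undominatedP [_ wA] x y; rewrite !inE.
case/orP=> [/eqP ->|xA]; case/orP=> [/eqP ->|yA].
- by rewrite girr.
- exact: wA.
- by rewrite gsym wA.
- exact: indA.
Qed.

Lemma admissible_add_star A0 A1 f w (S : pred T) :
  admissible g A0 A1 f -> w \in undominated g (A0 :|: A1) -> (forall y, S y -> g w y) ->
  #|[set y in nbhd g (A0 :|: A1) | S y]| <= 1 ->
  let f' := add_star f w S in
  [/\ symmetric f', exists r, ranked f' r, subgraph f' g & touches f' (w |: (A0 :|: A1))].
Proof.
move=> [fsym [r rf] fg ftouch _ _ _ _] wfree Sg inner_le1 f'.
have [wA wnA] := undominatedP wfree.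
have w_iso y : ~~ f w y.
  apply/negP => fwy; case/orP: (ftouch _ _ fwy) => [wA'|yA]; first by rewrite wA' in wA.
  by have := wnA _ yA; rewrite fg.
split.
- exact: add_star_sym.
- apply: ranked_add_star rf w_iso _ _ => //; first by apply/negP => /Sg; rewrite girr.
  apply: leq_trans inner_le1; apply: subset_leq_card; apply/subsetP => y.
  rewrite !inE => /andP [Sy /existsP [z fyz]]; rewrite Sy andbT.
  case/orP: (ftouch _ _ fyz) => [yA|zA]; first by have := wnA _ yA; rewrite Sg.
  by apply/existsP; exists z; rewrite zA fg.
- move=> x y /or3P [/fg // | /andP [/eqP -> /Sg //] | /andP [/eqP -> /Sg]].
  by rewrite gsym.
- move=> x y /or3P [fxy | /andP [/eqP -> _] | /andP [/eqP -> _]].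
  all: rewrite !in_setU1 ?eqxx ?orbT //.
  by case/orP: (ftouch _ _ fxy) => ->; rewrite !orbT.
Qed.

Lemma admissible_grow0 A0 A1 f w :
  admissible g A0 A1 f -> w \in undominated g (A0 :|: A1) ->
  #|[set y in nbhd g (A0 :|: A1) | g w y]| <= 1 ->
  admissible g (w |: A0) A1 (add_star f w (g w)).
Proof.
move=> adm wfree le1.
have [fsym' rf' fg' touch'] := admissible_add_star adm wfree (fun _ => id) le1.
have [wA _] := undominatedP wfree.
split=> //.
- by rewrite -setUA.
- rewrite disjoints_subset subUset sub1set -disjoints_subset (admissible_disjoint adm).
  by rewrite !inE andbT; apply: contra wA; rewrite inE => ->; rewrite orbT.
- by rewrite -setUA; apply: independent_setU1 => //; exact: admissible_indep adm.
- move=> v y; rewrite in_setU1 => /orP [/eqP -> gwy|vA0 gvy]; first exact: add_star_center.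
  exact/subgraph_add_star/(admissible_full adm).
- move=> v /(admissible_almost_full adm) [d fvy]; exists d => y gvy yd.
  exact/subgraph_add_star/fvy.
Qed.

Lemma admissible_grow1 A0 A1 f w :
  admissible g A0 A1 f -> w \in undominated g (A0 :|: A1) ->
  #|[set y in nbhd g (A0 :|: A1) | g w y]| <= 2 ->
  exists f', admissible g A0 (w |: A1) f'.
Proof.
move=> adm wfree; set X := [set y in _ | _] => le2.
have [d Xd_le1] : exists d, #|X :\ d| <= 1.
  have [->|[d dX]] := set_0Vmem X; first by exists w; rewrite set0D cards0.
  by exists d; move: le2; rewrite (cardsD1 d X) dX.
pose S := [pred y | g w y && (y != d)].
have le1 : #|[set y in nbhd g (A0 :|: A1) | S y]| <= 1.
  apply: leq_trans Xd_le1; apply: subset_leq_card; apply/subsetP => y.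
  by rewrite !inE => /andP [-> /andP [-> ->]].
have Sg y : S y -> g w y by case/andP.
have [fsym' rf' fg' touch'] := admissible_add_star adm wfree Sg le1.
have [wA _] := undominatedP wfree.
exists (add_star f w S); split=> //.
- by rewrite setUCA.
- rewrite disjoint_sym disjoints_subset subUset sub1set -disjoints_subset disjoint_sym.
  by rewrite (admissible_disjoint adm) !inE andbT; apply: contra wA; rewrite inE => ->.
- by rewrite setUCA; apply: independent_setU1 => //; exact: admissible_indep adm.
- by move=> v y vA0 gvy; exact/subgraph_add_star/(admissible_full adm).
- move=> v; rewrite in_setU1 => /orP [/eqP ->|/(admissible_almost_full adm) [d' fvy]].
    by exists d => y gwy yd; apply: add_star_center; rewrite /= gwy.
  by exists d' => y gvy yd; exact/subgraph_add_star/fvy.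
Qed.

End Admissible.

Lemma admissible_forest (T : finType) (g : rel T) A0 A1 f :
  admissible g A0 A1 f -> forest f.
Proof. by case=> fsym [r rf] *; exact: ranked_forest fsym rf. Qed.

Lemma admissible_deg_full (T : finType) (g : rel T) A0 A1 f v :
  admissible g A0 A1 f -> v \in A0 -> deg f v = deg g v.
Proof.
move=> adm vA0; apply: eq_card => y; rewrite !inE.
apply/idP/idP => [fvy|gvy]; first exact: admissible_sub adm _ _ fvy.
exact: admissible_full adm _ _ vA0 gvy.
Qed.

Lemma admissible_deg_almost_full (T : finType) (g : rel T) A0 A1 f v :
  admissible g A0 A1 f -> v \in A1 -> (deg g v).-1 <= deg f v.
Proof.
move=> adm /(admissible_almost_full adm) [d fvy].
have : [set y | g v y] \subset d |: [set y | f v y].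
  apply/subsetP => y; rewrite !inE => gvy.
  by have [//|yd] := eqVneq y d; rewrite fvy.
by move/subset_leq_card; rewrite /deg cardsU1; lia.
Qed.

Lemma saturate (T : finType) (P : {set T} -> Prop) (grow : {set T} -> pred T) :
  (forall A w, P A -> grow A w -> w \notin A /\ P (w |: A)) ->
  forall A, P A -> exists2 A', P A' & forall w, ~~ grow A' w.
Proof.
move=> ext A; move: {2}(#|T| - #|A|) (leqnn (#|T| - #|A|)) => k.
elim: k A => [|k IH] A hk PA.
all: have [w grow_w|stuck] := pickP (grow A); last by exists A => // w; rewrite stuck.
all: have [wA PwA] := ext A w PA grow_w; have := max_card (w |: A); rewrite cardsU1 wA.
  by move=> ?; exfalso; lia.
by move=> ?; apply: IH PwA; rewrite cardsU1 wA; lia.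
Qed.

Section Saturation.
Variables (T : finType) (g : rel T).
Hypotheses (gsym : symmetric g) (girr : irreflexive g).

Lemma admissible_saturate0 :
  exists A0 f, admissible g A0 set0 f /\
    forall w, w \in undominated g A0 -> 2 <= #|[set y in nbhd g A0 | g w y]|.
Proof.
pose P A := exists f, admissible g A set0 f.
pose grow A w := (w \in undominated g A) && (#|[set y in nbhd g A | g w y]| <= 1).
have ext A w : P A -> grow A w -> w \notin A /\ P (w |: A).
  move=> [f adm] /andP [wfree le1]; rewrite -(setU0 A) in wfree le1.
  have [wA _] := undominatedP wfree; split; first by rewrite setU0 in wA.
  by exists (add_star f w (g w)); exact: admissible_grow0.
have [A0 [f adm] maximal] := saturate ext (ex_intro _ _ (admissible0 g)).
exists A0, f; split=> // w wfree; have := maximal w.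
by rewrite /grow wfree ltnNge.
Qed.

Lemma admissible_saturate1 A0 f :
  admissible g A0 set0 f ->
  exists A1 f', admissible g A0 A1 f' /\
    forall w, w \in undominated g (A0 :|: A1) -> 3 <= #|[set y in nbhd g (A0 :|: A1) | g w y]|.
Proof.
move=> adm0; pose P A := exists f, admissible g A0 A f.
pose grow A w :=
  (w \in undominated g (A0 :|: A)) && (#|[set y in nbhd g (A0 :|: A) | g w y]| <= 2).
have ext A w : P A -> grow A w -> w \notin A /\ P (w |: A).
  move=> [f1 adm1] /andP [wfree le2]; split; last exact: admissible_grow1 adm1 wfree le2.
  by have [+ _] := undominatedP wfree; apply: contra; rewrite inE => ->; rewrite orbT.
have [A1 [f' adm] maximal] := saturate ext (ex_intro _ _ adm0 : P set0).
exists A1, f'; split=> // w wfree; have := maximal w.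
by rewrite /grow wfree ltnNge.
Qed.

End Saturation.

Lemma card_sep_sum (T : finType) (B : {set T}) (p : pred T) :
  #|[set y in B | p y]| = \sum_(y in B) p y.
Proof.
rewrite -sum1_card (eq_bigl (fun y => (y \in B) && p y)) => [|y]; last by rewrite inE.
by rewrite big_mkcondr; apply: eq_bigr => y _; case: (p y).
Qed.

Section Counting.
Variables (T : finType) (g : rel T) (A : {set T}) (D : nat).
Hypotheses (gsym : symmetric g) (maxdegD : forall v, deg g v <= D).

Lemma card_nbhd : #|nbhd g A| <= #|A| * D.
Proof.
rewrite -sum1_card -sum_nat_const.
apply: (@leq_trans (\sum_(y in nbhd g A) \sum_(a in A) g y a)).
  apply: leq_sum => y; rewrite inE => /existsP [a /andP [aA gya]].
  by rewrite -card_sep_sum card_gt0; apply/set0Pn; exists a; rewrite inE aA.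
rewrite exchange_big /=; apply: leq_sum => a _; rewrite -card_sep_sum.
apply: leq_trans (maxdegD a); apply: subset_leq_card; apply/subsetP => y.
by rewrite !inE gsym => /andP [].
Qed.

(* A dominated vertex outside [A] has a neighbour in [A], hence at most
   [D.-1] undominated neighbours. *)
Lemma card_undominated k :
  (forall w, w \in undominated g A -> k <= #|[set y in nbhd g A | g w y]|) ->
  k * #|undominated g A| <= #|nbhd g A| * D.-1.
Proof.
move=> many; rewrite mulnC -!sum_nat_const.
apply: (@leq_trans (\sum_(w in undominated g A) \sum_(y in nbhd g A) g w y)).
  by apply: leq_sum => w wfree; rewrite -card_sep_sum many.
rewrite exchange_big /=; apply: leq_sum => y; rewrite -card_sep_sum inE.
case/existsP => a /andP [aA gya].
have aU : a \notin [set w in undominated g A | g w y] by rewrite !inE aA.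
have : a |: [set w in undominated g A | g w y] \subset [set w | g y w].
  by apply/subsetP => x; rewrite !inE => /orP [/eqP ->|/andP [_]]; rewrite // gsym.
move/subset_leq_card; rewrite cardsU1 aU; have := maxdegD y; rewrite /deg; lia.
Qed.

Lemma card_domination k :
  (forall w, w \in undominated g A -> k <= #|[set y in nbhd g A | g w y]|) ->
  k * #|T| <= #|A| * (k + D * (k + D.-1)).
Proof.
move=> /card_undominated leU; have leN := card_nbhd.
have : #|T| <= #|A| + #|nbhd g A| + #|undominated g A|.
  by rewrite -(cardsC (A :|: nbhd g A)) leq_add2r cardsU leq_subr.
nia.
Qed.

End Counting.

Local Open Scope ring_scope.

Lemma gamma_bound (D n a b : nat) :
  (2 * n <= a * (2 + D * (2 + D.-1)))%N ->
  (3 * n <= (a + b) * (3 + D * (3 + D.-1)))%N ->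
  gamma D * n%:R <= a%:R + b%:R / 2 :> rat.
Proof.
have -> : (2 + D * (2 + D.-1) = D ^ 2 + D + 2)%N.
  by case: D => [|D] //; rewrite expnS expn1 /=; nia.
have -> : (3 + D * (3 + D.-1) = D ^ 2 + 2 * D + 3)%N.
  by case: D => [|D] //; rewrite expnS expn1 /=; nia.
rewrite /gamma natrM -!(ler_nat rat) !natrM.
have c1_gt0 : 0 < (D ^ 2 + D + 2)%N%:R :> rat by rewrite ltr0n addn_gt0 orbT.
have c2_gt0 : 0 < (D ^ 2 + 2 * D + 3)%N%:R :> rat by rewrite ltr0n addn_gt0 orbT.
move: c1_gt0 c2_gt0; move: (D ^ 2 + D + 2)%N%:R (D ^ 2 + 2 * D + 3)%N%:R => c1 c2.
rewrite natrD => c1_gt0 c2_gt0 e1 e2.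
have le1 : n%:R / c1 <= a%:R / 2.
  by rewrite ler_pdivrMr // (_ : _ / 2 * c1 = a%:R * c1 / 2); [lra | field].
have le2 : 3 * n%:R / (2 * c2) <= (a%:R + b%:R) / 2.
  by rewrite ler_pdivrMr ?mulr_gt0 // (_ : _ / 2 * _ = (a%:R + b%:R) * c2); [lra | field].
have -> : (1 / c1 + 3 / (2 * c2)) * n%:R = n%:R / c1 + 3 * n%:R / (2 * c2).
  by field; rewrite !lt0r_neq0.
lra.
Qed.

Theorem lemma5p2 (T : finType) (g : rel T) :
  simple_graph g -> connected_graph g -> (1 <= maxdeg g)%N ->
  exists (f : rel T) (A0 A1 : {set T}),
    [/\ forest f, subgraph f g, [disjoint A0 & A1] &
     [/\ independent g (A0 :|: A1),
        (forall v, v \in A0 -> deg f v = deg g v),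
        (forall v, v \in A1 -> (deg g v).-1 <= deg f v)%N &
        gamma (maxdeg g) * #|T|%:R <= #|A0|%:R + #|A1|%:R / 2 :> rat]].
Proof.
move=> [gsym girr] _ _.
have deg_le_maxdeg v : (deg g v <= maxdeg g)%N by exact: leq_bigmax.
have [A0 [f0 [adm0 many0]]] := admissible_saturate0 gsym girr.
have [A1 [f [adm many1]]] := admissible_saturate1 gsym girr adm0.
have disj := admissible_disjoint adm.
exists f, A0, A1; split=> //; [exact: admissible_forest adm | exact: admissible_sub adm |].
split; first exact: admissible_indep adm.
- by move=> v; apply: admissible_deg_full adm.
- by move=> v; apply: admissible_deg_almost_full adm.
apply: gamma_bound; first exact: (card_domination (k := 2) gsym deg_le_maxdeg many0).
have <- : #|A0 :|: A1| = (#|A0| + #|A1|)%N by apply/eqP; rewrite (leq_card_setU A0 A1).2.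
exact: (card_domination (k := 3) gsym deg_le_maxdeg many1).
Qed.
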